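(* Let $p$ be a positive integer. If problem (BM) has a spurious 2-critical point, then $C\in \mathbb{S}^n_{n-p}+\mathcal{L}$ (Minkowski sum), where $\mathbb{S}^n_{n-p}=\{X\in\mathbb{S}^n:\operatorname{rank}X\le n-p\}$ and $\mathcal{L}=\bigcup_I \operatorname{span}\{A_i : i\in I\}$, the union being over all subsets $I\subseteq[m]$ of constraints that can be simultaneously active, i.e. such that some $X\in\mathscr{X}$ satisfies $A_i\bullet X=b_i$ for all $i\in I$.
   Context: Let $\mathbb{S}^n$ be the space of real symmetric $n\times n$ matrices, with inner product $A\bullet B=\operatorname{trace}(A^TB)$ (also used for $A\in\mathbb{S}^n$, $B\in\mathbb{R}^{n\times n}$), and $\mathbb{S}^n_+$ the cone of positive semidefinite matrices. Let $m=m_1+m_2$, let $C,A_1,\dots,A_m\in\mathbb{S}^n$, $b\in\mathbb{R}^m$, $\mathcal{A}^*(\lambda)=\sum_i\lambda_iA_i$. Let $\mathscr{X}=\{X\in\mathbb{S}^n_+ : A_i\bullet X=b_i \ (i\le m_1),\ A_i\bullet X\ge b_i\ (m_1<i\le m)\}$; assume $\mathscr{X}$ is nonempty and that $\min_{X\in\mathscr{X}} C\bullet X$ is attained. Problem (BM) is $\min_{Y\in\mathbb{R}^{n\times p}} C\bullet YY^T$ subject to $YY^T\in\mathscr{X}$. For $Y$, let $I(Y)=\{i: A_i\bullet YY^T=b_i\}$ and $S(\lambda)=C-\mathcal{A}^*(\lambda)$. A point $Y$ is 1-critical for (BM) if $YY^T\in\mathscr{X}$ and there is $\lambda\in\mathbb{R}^{m_1}\times\mathbb{R}^{m_2}_+$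 with $\lambda_i=0$ for $i\notin I(Y)$ and $S(\lambda)Y=0$; it is 2-critical if moreover (for such a $\lambda$) $S(\lambda)\bullet UU^T\ge 0$ for all $U\in\mathbb{R}^{n\times p}$ with $A_i\bullet UY^T=0$ for all $i\in I(Y)$. A critical point is spurious if it is not a global minimizer of (BM). *)

From HB Require Import structures.
From mathcomp Require Import all_boot all_order all_algebra.
From mathcomp Require Import reals.
Set Implicit Arguments. Unset Strict Implicit. Unset Printing Implicit Defensive.
Import Order.TTheory GRing.Theory Num.Theory.
Local Open Scope ring_scope.

Section BM.
Variable R : realType.

Definition symmx (n : nat) (X : 'M[R]_n) : Prop := X^T = X.

Definition psdmx (n : nat) (X : 'M[R]_n) : Prop :=
  symmx X /\ forall x : 'cV[R]_n, 0 <= (x^T *m X *m x) 0 0.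

Definition inprod (k l : nat) (A B : 'M[R]_(k, l)) : R := \tr (A^T *m B).

(* feasible set \mathscr{X}: constraints indexed by 'I_(m1 + m2);
   i < m1 are equalities, the others are >= inequalities *)
Definition feasible (n m1 m2 : nat) (A : 'I_(m1 + m2) -> 'M[R]_n)
  (b : 'I_(m1 + m2) -> R) (X : 'M[R]_n) : Prop :=
  psdmx X /\
  forall i : 'I_(m1 + m2),
    if (i < m1)%N then inprod (A i) X = b i else b i <= inprod (A i) X.

Definition active (n p m1 m2 : nat) (A : 'I_(m1 + m2) -> 'M[R]_n)
  (b : 'I_(m1 + m2) -> R) (Y : 'M[R]_(n, p)) (i : 'I_(m1 + m2)) : Prop :=
  inprod (A i) (Y *m Y^T) = b i.

Definition Smat (n m1 m2 : nat) (C : 'M[R]_n) (A : 'I_(m1 + m2) -> 'M[R]_n)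
  (lam : 'I_(m1 + m2) -> R) : 'M[R]_n :=
  C - \sum_(i < m1 + m2) lam i *: A i.

Definition first_order_mult (n p m1 m2 : nat) (C : 'M[R]_n)
  (A : 'I_(m1 + m2) -> 'M[R]_n) (b : 'I_(m1 + m2) -> R) (Y : 'M[R]_(n, p))
  (lam : 'I_(m1 + m2) -> R) : Prop :=
  (forall i : 'I_(m1 + m2), (m1 <= i)%N -> 0 <= lam i) /\
  (forall i : 'I_(m1 + m2), ~ active A b Y i -> lam i = 0) /\
  Smat C A lam *m Y = 0.

Definition one_critical (n p m1 m2 : nat) (C : 'M[R]_n)
  (A : 'I_(m1 + m2) -> 'M[R]_n) (b : 'I_(m1 + m2) -> R) (Y : 'M[R]_(n, p)) : Prop :=
  feasible A b (Y *m Y^T) /\ exists lam, first_order_mult C A b Y lam.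

Definition two_critical (n p m1 m2 : nat) (C : 'M[R]_n)
  (A : 'I_(m1 + m2) -> 'M[R]_n) (b : 'I_(m1 + m2) -> R) (Y : 'M[R]_(n, p)) : Prop :=
  feasible A b (Y *m Y^T) /\
  exists lam, first_order_mult C A b Y lam /\
    forall U : 'M[R]_(n, p),
      (forall i, active A b Y i -> inprod (A i) (U *m Y^T) = 0) ->
      0 <= inprod (Smat C A lam) (U *m U^T).

Definition BM_global_min (n p m1 m2 : nat) (C : 'M[R]_n)
  (A : 'I_(m1 + m2) -> 'M[R]_n) (b : 'I_(m1 + m2) -> R) (Y : 'M[R]_(n, p)) : Prop :=
  feasible A b (Y *m Y^T) /\
  forall Y' : 'M[R]_(n, p), feasible A b (Y' *m Y'^T) ->
    inprod C (Y *m Y^T) <= inprod C (Y' *m Y'^T).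

Definition spurious_two_critical (n p m1 m2 : nat) (C : 'M[R]_n)
  (A : 'I_(m1 + m2) -> 'M[R]_n) (b : 'I_(m1 + m2) -> R) (Y : 'M[R]_(n, p)) : Prop :=
  two_critical C A b Y /\ ~ BM_global_min C A b Y.

Definition low_rank_sym (n p : nat) (X : 'M[R]_n) : Prop :=
  symmx X /\ (\rank X + p <= n)%N.

Definition simult_active (n m1 m2 : nat) (A : 'I_(m1 + m2) -> 'M[R]_n)
  (b : 'I_(m1 + m2) -> R) (I : {set 'I_(m1 + m2)}) : Prop :=
  exists X, feasible A b X /\ forall i, i \in I -> inprod (A i) X = b i.

Definition in_Lset (n m1 m2 : nat) (A : 'I_(m1 + m2) -> 'M[R]_n)
  (b : 'I_(m1 + m2) -> R) (L : 'M[R]_n) : Prop :=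
  exists I : {set 'I_(m1 + m2)}, simult_active A b I /\
    exists mu : 'I_(m1 + m2) -> R, L = \sum_(i in I) mu i *: A i.

End BM.

(** If the multiplier matrix [S = C - A^*(lambda)] of a 2-critical point [Y]
    is positive semidefinite, then [S Y = 0] and complementary slackness make
    [lambda] a dual certificate, so [Y] is a global minimizer (weak duality).
    For a spurious [Y] this fails, and then [Y] must have full column rank [p]:
    otherwise some nonzero [w] has [Y w^T = 0], every [U = u w] satisfies the
    linearized constraints [A_i . U Y^T = 0], and the second-order condition
    applied to [U U^T = |w|^2 u u^T] makes [S] positive semidefinite.  Full
    column rank and [S Y = 0] give [rank S <= n - p], while
    [C = S + sum_(i in I(Y)) lambda_i A_i] with [I(Y)] active at [Y Y^T]. *)

From HB Require Import structures.
From mathcomp Require Import all_boot all_order all_algebra.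
From mathcomp Require Import reals.
Set Implicit Arguments. Unset Strict Implicit.
Import Order.TTheory GRing.Theory Num.Theory.
Local Open Scope ring_scope.

Lemma mulmx_sum_col_row (R : pzSemiRingType) m n p (M : 'M[R]_(m, n))
    (N : 'M[R]_(n, p)) :
  M *m N = \sum_j col j M *m row j N.
Proof.
apply/matrixP => i k; rewrite !mxE summxE; apply: eq_bigr => j _.
by rewrite !mxE big_ord1 !mxE.
Qed.

Lemma rank_lt_left_kernel (F : fieldType) m n (B : 'M[F]_(m, n)) :
  (\rank B < m)%N -> exists2 w : 'rV_m, w != 0 & w *m B = 0.
Proof.
move=> rkB; have : kermx B != 0 by rewrite kermx_eq0 /row_free neq_ltn rkB.
by case/rowV0Pn => w /sub_kermxP wB w0; exists w.
Qed.

Lemma rV_mulmx_tr_gt0 (R : realDomainType) n (w : 'rV[R]_n) :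
  w != 0 -> 0 < (w *m w^T) 0 0.
Proof.
move=> w0; have wwE : (w *m w^T) 0 0 = \sum_k w 0 k ^+ 2.
  by rewrite mxE; apply: eq_bigr => k _; rewrite mxE expr2.
rewrite lt0r wwE sumr_ge0 ?andbT => [|k _]; last exact: sqr_ge0.
apply: contra w0 => /eqP ww0; apply/eqP/rowP => k; rewrite mxE.
apply/eqP; rewrite -sqrf_eq0; apply/eqP/(psumr_eq0P _ ww0) => // l _.
exact: sqr_ge0.
Qed.

Section InnerProduct.
Variable R : realType.

Lemma inprodDl k l (A B X : 'M[R]_(k, l)) :
  inprod (A + B) X = inprod A X + inprod B X.
Proof. by rewrite /inprod linearD /= mulmxDl mxtraceD. Qed.

Lemma inprodZl k l a (A X : 'M[R]_(k, l)) : inprod (a *: A) X = a * inprod A X.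
Proof. by rewrite /inprod linearZ /= -scalemxAl mxtraceZ. Qed.

Lemma inprodNl k l (A X : 'M[R]_(k, l)) : inprod (- A) X = - inprod A X.
Proof. by rewrite -scaleN1r inprodZl mulN1r. Qed.

Lemma inprodBl k l (A B X : 'M[R]_(k, l)) :
  inprod (A - B) X = inprod A X - inprod B X.
Proof. by rewrite inprodDl inprodNl. Qed.

Lemma inprod_suml k l (I : finType) (F : I -> 'M[R]_(k, l)) X :
  inprod (\sum_i F i) X = \sum_i inprod (F i) X.
Proof.
apply: (big_morph (fun M => inprod M X)) => [A B|]; first exact: inprodDl.
by rewrite /inprod linear0 mul0mx mxtrace0.
Qed.

Lemma inprod0r k l (A : 'M[R]_(k, l)) : inprod A 0 = 0.
Proof. by rewrite /inprod mulmx0 mxtrace0. Qed.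

Lemma inprodZr k l a (A X : 'M[R]_(k, l)) : inprod A (a *: X) = a * inprod A X.
Proof. by rewrite /inprod -scalemxAr mxtraceZ. Qed.

Lemma inprod_sumr k l (I : finType) (A : 'M[R]_(k, l)) (F : I -> 'M[R]_(k, l)) :
  inprod A (\sum_i F i) = \sum_i inprod A (F i).
Proof.
apply: (big_morph (inprod A)) => [X Y|]; last exact: inprod0r.
by rewrite /inprod mulmxDr mxtraceD.
Qed.

Lemma inprod_mul_tr_eq0 n p (S : 'M[R]_n) (Y Z : 'M[R]_(n, p)) :
  S *m Y = 0 -> inprod S (Z *m Y^T) = 0.
Proof.
move=> SY; rewrite /inprod mulmxA mxtrace_mulC mulmxA -trmx_mul SY.
by rewrite trmx0 mul0mx mxtrace0.
Qed.

Lemma inprod_outer_ge0 n p (S : 'M[R]_n) (M : 'M[R]_(n, p)) :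
  (forall u : 'cV_n, 0 <= inprod S (u *m u^T)) -> 0 <= inprod S (M *m M^T).
Proof.
move=> S_psd; rewrite mulmx_sum_col_row inprod_sumr; apply: sumr_ge0 => j _.
by rewrite -tr_col; apply: S_psd.
Qed.

Lemma inprod_outer_ge0_of_kernel n p (S : 'M[R]_n) (Y : 'M[R]_(n, p))
    (w : 'rV_p) :
  w != 0 -> w *m Y^T = 0 ->
  (forall U : 'M_(n, p), U *m Y^T = 0 -> 0 <= inprod S (U *m U^T)) ->
  forall u : 'cV_n, 0 <= inprod S (u *m u^T).
Proof.
move=> w0 wY S_nonneg u; have := S_nonneg (u *m w).
have -> : u *m w *m (u *m w)^T = (w *m w^T) 0 0 *: (u *m u^T).
  rewrite trmx_mul mulmxA -(mulmxA u) {1}[w *m w^T]mx11_scalar mul_mx_scalar.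
  by rewrite -scalemxAl.
rewrite inprodZr pmulr_rge0 ?rV_mulmx_tr_gt0 //; apply.
by rewrite -mulmxA wY mulmx0.
Qed.

End InnerProduct.

Section BurerMonteiro.
Variables (R : realType) (n p m1 m2 : nat) (C : 'M[R]_n).
Variables (A : 'I_(m1 + m2) -> 'M[R]_n) (b : 'I_(m1 + m2) -> R).

Definition active_set (Y : 'M[R]_(n, p)) : {set 'I_(m1 + m2)} :=
  [set i | inprod (A i) (Y *m Y^T) == b i].

Lemma active_set_simult_active Y :
  feasible A b (Y *m Y^T) -> simult_active A b (active_set Y).
Proof.
by move=> feasY; exists (Y *m Y^T); split=> // i; rewrite inE => /eqP.
Qed.

Lemma Smat_sym lam :
  symmx C -> (forall i, symmx (A i)) -> symmx (Smat C A lam).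
Proof.
move=> hC hA; rewrite /symmx /Smat linearB /= hC linear_sum /=; congr (_ - _).
by apply: eq_bigr => i _; rewrite linearZ /= hA.
Qed.

Lemma Smat_low_rank lam (Y : 'M[R]_(n, p)) :
  symmx C -> (forall i, symmx (A i)) -> \rank Y = p ->
  Smat C A lam *m Y = 0 -> low_rank_sym p (Smat C A lam).
Proof.
move=> hC hA rkY SY; split; first exact: Smat_sym.
by rewrite -rkY; apply: mulmx0_rank_max.
Qed.

Lemma first_order_mult_decomp Y lam :
  first_order_mult C A b Y lam ->
  C = Smat C A lam + \sum_(i in active_set Y) lam i *: A i.
Proof.
case=> _ [lam_act _]; rewrite /Smat -[LHS](subrK (\sum_i lam i *: A i)).
congr (_ + _); rewrite [RHS]big_mkcond; apply: eq_bigr => i _.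
by rewrite inE; case: eqP => // inact; rewrite lam_act ?scale0r.
Qed.

Lemma inprod_Smat lam X :
  inprod C X = inprod (Smat C A lam) X + \sum_i lam i * inprod (A i) X.
Proof.
rewrite /Smat inprodBl inprod_suml.
by under eq_bigr do rewrite inprodZl; rewrite subrK.
Qed.

Lemma first_order_mult_weighted_le (Y : 'M[R]_(n, p)) lam X :
  first_order_mult C A b Y lam -> feasible A b X ->
  \sum_i lam i * inprod (A i) (Y *m Y^T) <= \sum_i lam i * inprod (A i) X.
Proof.
case=> lam_ge0 [lam_act _] [_ feasX]; apply: ler_sum => i _.
have [actY|inact] := eqVneq (inprod (A i) (Y *m Y^T)) (b i); last first.
  by rewrite lam_act ?mul0r //; apply/eqP.
move: (feasX i); rewrite actY; case: ifP => [_ -> //| /negbT].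
by rewrite -leqNgt => /lam_ge0 /ler_wpM2l; apply.
Qed.

Lemma psd_Smat_global_min (Y : 'M[R]_(n, p)) lam :
  feasible A b (Y *m Y^T) -> first_order_mult C A b Y lam ->
  (forall u : 'cV_n, 0 <= inprod (Smat C A lam) (u *m u^T)) ->
  BM_global_min C A b Y.
Proof.
move=> feasY mult S_psd; split=> // Y' feasY'.
have SYY0 : inprod (Smat C A lam) (Y *m Y^T) = 0.
  by apply: inprod_mul_tr_eq0; case: mult => _ [].
rewrite !(inprod_Smat lam) SYY0 add0r -[X in X <= _]add0r.
by apply: lerD; [apply: inprod_outer_ge0 | apply: first_order_mult_weighted_le].
Qed.

End BurerMonteiro.

Theorem theorem3 (R : realType) (n p m1 m2 : nat) (C : 'M[R]_n)
  (A : 'I_(m1 + m2) -> 'M[R]_n) (b : 'I_(m1 + m2) -> R) :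
  (0 < p)%N ->
  symmx C ->
  (forall i, symmx (A i)) ->
  (exists X, feasible A b X) ->
  (exists X0, feasible A b X0 /\
     forall X, feasible A b X -> inprod C X0 <= inprod C X) ->
  (exists Y : 'M[R]_(n, p), spurious_two_critical C A b Y) ->
  exists X L : 'M[R]_n, low_rank_sym p X /\ in_Lset A b L /\ C = X + L.
Proof.
move=> _ hC hA _ _ [Y [[feasY [lam [mult second_order]]] not_min]].
have := rank_leq_col Y; rewrite leq_eqVlt => /orP[/eqP rkY | rkY].
  exists (Smat C A lam), (\sum_(i in active_set A b Y) lam i *: A i).
  split; first by apply: (Smat_low_rank hC hA rkY); case: mult => _ [].
  split; last exact: first_order_mult_decomp.
  exists (active_set A b Y); split; last by exists lam.
  exact: active_set_simult_active.
have [w w0 wY] : exists2 w : 'rV_p, w != 0 & w *m Y^T = 0.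
  by apply: rank_lt_left_kernel; rewrite mxrank_tr.
case: not_min; apply: (psd_Smat_global_min feasY mult).
apply: (inprod_outer_ge0_of_kernel w0 wY) => U UY.
by apply: second_order => i _; rewrite UY inprod0r.
Qed.
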